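(* Let $\psi$ be a reduced function with $\delta(\psi)<2$, let $(n_i)_{i\ge1}$ be its associated sequence, and let $(n'_i)_{i\ge1}$ be another increasing sequence of non-negative integers such that $n'_{i+1}=2n'_i-n'_{\psi(i)}$ for all sufficiently large $i$. Then $n'_i/n_i$ has a finite positive limit as $i\to\infty$, and $\delta(\psi)=\limsup_{i\to\infty} n'_{i+1}/n'_i$.
   Context: $\mathcal{A}$ is an alphabet disjoint from $\mathbb{N}^*=\{1,2,\dots\}$. A function here is a map $\psi:\mathbb{N}^*\to\mathbb{N}^*\sqcup\mathcal{A}$ such that for every $n\ge1$ either $\psi(n)\in\mathcal{A}$ or $1\le\psi(n)\le n-1$. Let $(t_k)_{k\ge0}$ be the (finite or infinite) family, in increasing order, of all $n\ge1$ with $\psi(n)\in\mathcal{A}$ or $1\le\psi(n)\le n-2$. $\psi$ is reduced if for every $k\ge1$ such that $t_k$ exists: $\psi(t_k)\ne\psi(t_{k-1})$, and either $\psi(t_k)\in\mathcal{A}$ or $\psi(t_k)<t_{k-1}$. The sequence associated with a reduced $\psi$ is defined by $n_1=0$ and, for $i\ge1$, $n_{i+1}=2n_i-n_{\psi(i)}$ if $\psi(i)\in\mathbb{N}^*$, $n_{i+1}=2n_i+1$ if $\psi(i)\in\mathcal{A}$; and $\delta(\psi)=\limsup_{i\to\infty} n_{i+1}/n_i$. *)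

From HB Require Import structures.
From mathcomp Require Import all_boot all_order all_algebra.
From mathcomp Require Import all_classical all_reals all_analysis.
Set Implicit Arguments. Unset Strict Implicit. Unset Printing Implicit Defensive.
Import Order.TTheory GRing.Theory Num.Theory.

(* Functions psi : N* -> N* ⊔ A are modelled as psi : nat -> nat + A,
   with (inl k) meaning psi(n) = k ∈ N* and (inr a) meaning psi(n) = a ∈ A.
   The value at 0 is irrelevant (domain is N* = {1,2,...}). *)

Definition is_function (A : Type) (psi : nat -> nat + A) : Prop :=
  forall n, (1 <= n)%N ->
    (exists a, psi n = inr a) \/ (exists k, psi n = inl k /\ (1 <= k)%N /\ (k <= n - 1)%N).

Definition in_t (A : Type) (psi : nat -> nat + A) (n : nat) : Prop :=
  (1 <= n)%N /\
  ((exists a, psi n = inr a) \/ (exists k, psi n = inl k /\ (1 <= k)%N /\ (k <= n - 2)%N)).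

(* t_{k-1} = m and t_k = n are consecutive terms of the increasing family (t_k) *)
Definition consecutive_t (A : Type) (psi : nat -> nat + A) (m n : nat) : Prop :=
  in_t psi m /\ in_t psi n /\ (m < n)%N /\
  (forall j, (m < j)%N -> (j < n)%N -> ~ in_t psi j).

Definition reduced (A : Type) (psi : nat -> nat + A) : Prop :=
  is_function psi /\
  forall m n, consecutive_t psi m n ->
    psi n <> psi m /\
    ((exists a, psi n = inr a) \/ (exists k, psi n = inl k /\ (k < m)%N)).

(* Associated sequence: assoc_list psi m = [:: n_1; ...; n_{m+1}] *)
Definition next_val (A : Type) (psi : nat -> nat + A) (l : seq int) : int :=
  let i := size l in
  let ni := nth 0%R l i.-1 in
  match psi i with
  | inl k => (2 * ni - nth 0%R l k.-1)%R
  | inr _ => (2 * ni + 1)%R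
  end.

Fixpoint assoc_list (A : Type) (psi : nat -> nat + A) (m : nat) : seq int :=
  match m with
  | 0 => [:: 0%R]
  | m'.+1 => rcons (assoc_list psi m') (next_val psi (assoc_list psi m'))
  end.

(* n_i for i >= 1 (value at i = 0 is an irrelevant junk value) *)
Definition assoc_seq (A : Type) (psi : nat -> nat + A) (i : nat) : int :=
  nth 0%R (assoc_list psi i.-1) i.-1.

Local Open Scope ring_scope.

Definition limsup_ratio (R : realType) (u : nat -> int) : \bar R :=
  limn_esup (fun i => ((u i.+1)%:~R / (u i)%:~R : R)%:E).

Definition delta (R : realType) (A : Type) (psi : nat -> nat + A) : \bar R :=
  limsup_ratio R (assoc_seq psi).

From mathcomp Require Import all_boot all_order all_algebra.
From mathcomp Require Import all_classical all_reals all_analysis.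
From mathcomp Require Import zify ring lra.
Set Implicit Arguments. Unset Strict Implicit. Unset Printing Implicit Defensive.
Import Order.TTheory GRing.Theory Num.Theory numFieldNormedType.Exports.
Local Open Scope classical_set_scope.
Local Open Scope ring_scope.

(* Write [chord T x] for the slope of the chord from (N x, M x) to (N T, M T).
   Beyond T0 both sequences satisfy x (T+1) = 2 x T - x (p T), so the chord from T
   to T+1 has slope [chord T (p T)], and every chord ending at T+1 is a convex
   combination of that chord and a chord ending at T, the latter with weight at most
   N T / N (T+1).  Hence all chord slopes ending at T lie in an interval
   [lo T, hi T] whose length times N T is constant; since N grows at least linearly,
   the slopes, and with them M T / N T, converge, and the limit is positive because
   lo starts at 1 / N T0 and increases.  Applied to n and n' this gives
   n'/n --> L > 0; as moreover n (i+1) <= 3 n i, the ratios n (i+1) / n i and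
   n' (i+1) / n' i differ by a null sequence, so they have the same limsup. *)

Lemma stepwise_gap (R : realDomainType) (f : nat -> R) i :
  (forall j, (1 <= j < i)%N -> f j + 1 <= f j.+1) ->
  forall a b, (1 <= a <= b)%N -> (b <= i)%N -> f a + (b - a)%:R <= f b.
Proof.
move=> step a b /andP[a1]; elim: b => [|b IHb].
  by rewrite leqn0 => /eqP b0; move: a1; rewrite b0.
rewrite leq_eqVlt => /orP[/eqP<- _|ab bi]; first by rewrite subnn addr0.
have := step b; rewrite (leq_trans a1 ab) bi => /(_ isT).
by have := IHb ab (ltnW bi); rewrite subSn // mulrSr; lra.
Qed.

Lemma stepwise_lt (R : realDomainType) (f : nat -> R) :
  (forall j, (1 <= j)%N -> f j + 1 <= f j.+1) ->
  forall a b, (1 <= a < b)%N -> f a + 1 <= f b.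
Proof.
move=> step a b /andP[a1 ab].
have gap := @stepwise_gap _ f b (fun j j1b => step j (andP j1b).1) a b.
apply: le_trans (gap _ (leqnn b)); last by rewrite a1 ltnW.
by rewrite lerD2l ler1n subn_gt0.
Qed.

Lemma intr_lt_step (R : numDomainType) (x y : int) :
  x < y -> (x%:~R : R) + 1 <= y%:~R.
Proof. by rewrite -lezD1 -(ler_int R) intrD. Qed.

Lemma is_function_inl (A : Type) (psi : nat -> nat + A) i k :
  is_function psi -> (1 <= i)%N -> psi i = inl k -> (1 <= k < i)%N.
Proof.
move=> hf i1 ek; case: (hf i i1) => [[a]|[k' [ek' [k1 ki]]]]; first by rewrite ek.
by move: ek'; rewrite ek => -[->]; lia.
Qed.

Section AssociatedSequence.
Variables (A : Type) (psi : nat -> nat + A).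
Local Notation n := (assoc_seq psi).

Lemma size_assoc_list m : size (assoc_list psi m) = m.+1.
Proof. by elim: m => //= m IH; rewrite size_rcons IH. Qed.

Lemma nth_assoc_list m j : (j <= m)%N -> nth 0 (assoc_list psi m) j = n j.+1.
Proof.
elim: m => [|m IH]; first by rewrite leqn0 => /eqP ->.
rewrite leq_eqVlt => /orP[/eqP -> //|jm].
by rewrite /= nth_rcons size_assoc_list jm IH.
Qed.

Lemma assoc_seq1 : n 1 = 0.
Proof. by []. Qed.

Lemma assoc_seq_succ i : n i.+2 = next_val psi (assoc_list psi i).
Proof. by rewrite /assoc_seq /= nth_rcons size_assoc_list ltnn eqxx. Qed.

Lemma assoc_seq_inl i k : (1 <= k <= i)%N -> psi i = inl k ->
  n i.+1 = 2 * n i - n k.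
Proof.
case: i => [|i]; first by case: k.
case: k => // k /= ki ek.
by rewrite assoc_seq_succ /next_val size_assoc_list ek !nth_assoc_list.
Qed.

Lemma assoc_seq_inr i a : (1 <= i)%N -> psi i = inr a -> n i.+1 = 2 * n i + 1.
Proof.
case: i => // i _ ea.
by rewrite assoc_seq_succ /next_val size_assoc_list ea nth_assoc_list.
Qed.

Hypothesis psi_fun : is_function psi.

Lemma assoc_seq_step i : (1 <= i)%N -> n i + 1 <= n i.+1.
Proof.
elim/ltn_ind: i => i IH i1.
have gap : forall a b, (1 <= a <= b)%N -> (b <= i)%N -> n a + (b - a)%:R <= n b.
  by apply: stepwise_gap => j /andP[j1 ji]; exact: IH.
case: (psi_fun i1) => [[a ea]|[k [ek _]]].
  rewrite (assoc_seq_inr i1 ea).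
  have := gap 1%N i i1 (leqnn i); rewrite assoc_seq1.
  have := ler0n int (i - 1); lra.
have /andP[k1 ki] := is_function_inl psi_fun i1 ek.
rewrite (assoc_seq_inl _ ek); last by rewrite k1 ltnW.
have := gap k i _ (leqnn i); rewrite k1 ltnW // => /(_ isT).
have : (1 <= i - k)%N by lia.
rewrite -(ler_nat int); lra.
Qed.

Lemma assoc_seq_ge0 i : 0 <= n i.
Proof.
case: i => // i; apply: le_trans (ler0n _ i) _.
have := @stepwise_gap _ n i.+1 _ 1%N i.+1 isT (leqnn _).
rewrite assoc_seq1 add0r subn1; apply => j /andP[j1 _]; exact: assoc_seq_step.
Qed.

Lemma assoc_seq_succ_le i : (1 <= i)%N -> n i.+1 <= 2 * n i + 1.
Proof.
move=> i1; case: (psi_fun i1) => [[a ea]|[k [ek _]]].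
  by rewrite (assoc_seq_inr i1 ea).
have /andP[k1 ki] := is_function_inl psi_fun i1 ek.
rewrite (assoc_seq_inl _ ek); last by rewrite k1 ltnW.
have := assoc_seq_ge0 k; lra.
Qed.

Lemma assoc_seq_ratio_bounded (R : realFieldType) i : (2 <= i)%N ->
  (n i)%:~R != 0 :> R /\ `|(n i.+1)%:~R / (n i)%:~R| <= 3 :> R.
Proof.
move=> i2; have i1 : (1 <= i)%N by exact: ltnW.
have ni : 1 <= n i.
  have := @stepwise_lt _ n (fun j j1 => assoc_seq_step j1) 1%N i.
  by rewrite assoc_seq1 add0r i2; apply.
have ni1 := assoc_seq_ge0 i.+1; have ni1' := assoc_seq_succ_le i1.
have niR : 1 <= (n i)%:~R :> R by rewrite ler1z.
split; first by rewrite gt_eqF //; lra.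
rewrite ger0_norm ?divr_ge0 ?ler0z //; last lra.
rewrite ler_pdivrMr; last lra.
have : n i.+1 <= 3 * n i by lra.
by rewrite -(ler_int R) intrM.
Qed.

End AssociatedSequence.

Lemma ler_ratio_shift (R : realFieldType) (a b c : R) :
  0 <= a -> a < b -> b <= c -> (b - a) / (c - a) <= b / c.
Proof.
move=> a0 ab bc; have b0 : 0 < b by lra.
rewrite ler_pdivrMr ?subr_gt0 ?(lt_le_trans ab) // mulrAC ler_pdivlMr; last lra.
by nra.
Qed.

Lemma affine_step_between (R : realFieldType) (c lo hi y w lam : R) :
  0 <= w <= lam -> lo <= c <= hi -> lo <= y <= hi ->
  c + lam * (lo - c) <= c + w * (y - c) <= c + lam * (hi - c).
Proof. by move=> /andP[w0 wl] /andP[lc ch] /andP[ly yh]; apply/andP; split; nra. Qed.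

Section CommonRecurrence.
Variables (R : realType) (N M : nat -> R) (p : nat -> nat) (T0 : nat).
Hypothesis T0_ge2 : (2 <= T0)%N.
Hypothesis N1 : N 1 = 0.
Hypothesis N_step : forall a, (1 <= a)%N -> N a + 1 <= N a.+1.
Hypothesis M_step : forall a, (1 <= a)%N -> M a + 1 <= M a.+1.
Hypothesis p_lt : forall T, (T0 <= T)%N -> (1 <= p T < T)%N.
Hypothesis N_rec : forall T, (T0 <= T)%N -> N T.+1 = 2 * N T - N (p T).
Hypothesis M_rec : forall T, (T0 <= T)%N -> M T.+1 = 2 * M T - M (p T).

Let N_lt := stepwise_lt N_step.
Let M_lt := stepwise_lt M_step.

Lemma N_ge a : (1 <= a)%N -> a%:R <= N a + 1.
Proof.
move=> a1; have : N 1 + (a - 1)%:R <= N a.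
  apply: (@stepwise_gap _ N a); rewrite ?a1 //.
  by move=> j /andP[j1 _]; exact: N_step.
by rewrite N1 add0r -[in a%:R](subnK a1) natrD => /lerD; apply.
Qed.

Lemma N_ge0 a : (1 <= a)%N -> 0 <= N a.
Proof.
move=> a1; have := N_ge a1; have : 1 <= a%:R :> R by rewrite ler1n.
lra.
Qed.

Lemma N_gt0 a : (2 <= a)%N -> 0 < N a.
Proof. by move=> a2; have := @N_lt 1 a a2; rewrite N1; lra. Qed.

Definition chord T x := (M T - M x) / (N T - N x).

Definition chord_step T b := chord T (p T) + N T / N T.+1 * (b - chord T (p T)).

Fixpoint chord_bound b0 T :=
  if T is T'.+1 then (if (T0 <= T')%N then chord_step T' (chord_bound b0 T') else b0)
  else b0.

(* At T0 every chord has rise in [1, M T0 - M 1] and run in [1, N T0]. *)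
Local Notation lo := (chord_bound (N T0)^-1).
Local Notation hi := (chord_bound (M T0 - M 1)).

Lemma chord_bound_init b0 T : (T <= T0)%N -> chord_bound b0 T = b0.
Proof. by case: T => //= T lt; rewrite leqNgt lt. Qed.

Lemma chord_bound_succ b0 T : (T0 <= T)%N ->
  chord_bound b0 T.+1 = chord_step T (chord_bound b0 T).
Proof. by rewrite /= => ->. Qed.

Section Step.
Variable T : nat.
Hypothesis T0T : (T0 <= T)%N.

Let step_facts :
  [/\ (1 <= p T < T)%N, 0 < N T, N (p T) + 1 <= N T & N T.+1 = 2 * N T - N (p T)].
Proof.
have pT := p_lt T0T; split => //; last exact: N_rec.
  exact: N_gt0 (leq_trans T0_ge2 T0T).
exact: N_lt.
Qed.

Lemma chord_step_ratio : 0 <= N T / N T.+1 <= 1.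
Proof.
have [_ NT NpT NT1E] := step_facts; have NT1 : 0 < N T.+1 by lra.
by rewrite divr_ge0 ?(ltW NT) ?(ltW NT1) //= ler_pdivrMr // mul1r; lra.
Qed.

Lemma chord_stepB b b' : chord_step T b - chord_step T b' = N T / N T.+1 * (b - b').
Proof. by rewrite /chord_step; ring. Qed.

Lemma chord_succ_prev : chord T.+1 T = chord T (p T).
Proof. by rewrite /chord N_rec // M_rec //; congr (_ / _); ring. Qed.

Lemma chord_succ x : (1 <= x < T)%N ->
  chord T.+1 x = chord T (p T) + (N T - N x) / (N T.+1 - N x) * (chord T x - chord T (p T)).
Proof.
move=> xT; have [_ NT NpT NT1E] := step_facts.
have Nx := N_lt xT; have Nx0 := N_ge0 (andP xT).1.
rewrite /chord M_rec // NT1E; field.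
by apply/and3P; split; apply/eqP; lra.
Qed.

Lemma chord_succ_weight x : (1 <= x < T)%N ->
  0 <= (N T - N x) / (N T.+1 - N x) <= N T / N T.+1.
Proof.
move=> xT; have [_ NT NpT NT1E] := step_facts.
have Nx := N_lt xT; have Nx0 := N_ge0 (andP xT).1.
rewrite divr_ge0 /=; try lra.
by apply: ler_ratio_shift; lra.
Qed.

End Step.

Lemma chord_bound_T0 x : (1 <= x < T0)%N -> lo T0 <= chord T0 x <= hi T0.
Proof.
move=> xT0; rewrite !chord_bound_init // /chord.
have NT0 := N_gt0 T0_ge2; have Nx := N_ge0 (andP xT0).1.
have Nx1 := N_lt xT0; have Mx1 := M_lt xT0.
have M1x : M 1 <= M x.
  have [->|x_gt1] : x = 1%N \/ (1 < x)%N by move: xT0; lia.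
    by [].
  by have := @M_lt 1 x x_gt1; lra.
apply/andP; split.
  have : (N T0)^-1 * (N T0 - N x) <= 1.
    rewrite mulrBr mulVf ?gt_eqF //.
    have : 0 <= (N T0)^-1 * N x by rewrite mulr_ge0 // invr_ge0 ltW.
    lra.
  rewrite ler_pdivlMr; lra.
by rewrite ler_pdivrMr; nra.
Qed.

Lemma chord_bounds T x : (T0 <= T)%N -> (1 <= x < T)%N -> lo T <= chord T x <= hi T.
Proof.
elim: T x => [|T IH] x; first by rewrite leqn0 => /eqP T00; move: T0_ge2; rewrite T00.
rewrite leq_eqVlt => /orP[/eqP <-|]; first exact: chord_bound_T0.
rewrite ltnS => T0T /andP[x1 xT]; rewrite !chord_bound_succ // /chord_step.
have /andP[w0 wl] := chord_step_ratio T0T.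
have hc := IH _ T0T (p_lt T0T).
move: xT; rewrite ltnS leq_eqVlt => /orP[/eqP ->|xT].
  rewrite chord_succ_prev //.
  have := @affine_step_between _ _ _ _ (chord T (p T)) 0 _ _ hc hc.
  by rewrite mul0r addr0; apply; rewrite lexx.
rewrite chord_succ ?x1 //; apply: affine_step_between => //.
  by apply: chord_succ_weight; rewrite ?x1.
by apply: IH; rewrite ?x1.
Qed.

Lemma chord_bound_width T : (T0 <= T)%N ->
  (hi T - lo T) * N T = (hi T0 - lo T0) * N T0.
Proof.
elim: T => [|T IH]; first by rewrite leqn0 => /eqP T00; move: T0_ge2; rewrite T00.
rewrite leq_eqVlt => /orP[/eqP <-|] //.
rewrite ltnS => T0T; rewrite !chord_bound_succ // chord_stepB -IH //.
have NT1 : 0 < N T.+1 by apply: N_gt0; lia.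
by rewrite mulrAC divfK ?gt_eqF // mulrC.
Qed.

Lemma chord_bound_lo_nondecreasing : nondecreasing_seq lo.
Proof.
apply/nondecreasing_seqP => T; have [T0T|TT0] := leqP T0 T; last first.
  by rewrite !chord_bound_init // ltnW.
have /andP[lc _] := chord_bounds T0T (p_lt T0T).
have /andP[w0 w1] := chord_step_ratio T0T.
rewrite chord_bound_succ // /chord_step; nra.
Qed.

Lemma chord_bound_hi_nonincreasing : nonincreasing_seq hi.
Proof.
apply/nonincreasing_seqP => T; have [T0T|TT0] := leqP T0 T; last first.
  by rewrite !chord_bound_init // ltnW.
have /andP[_ ch] := chord_bounds T0T (p_lt T0T).
have /andP[w0 w1] := chord_step_ratio T0T.
rewrite chord_bound_succ // /chord_step; nra.
Qed.

Lemma chord_bound_lo_le_hi k m : lo k <= hi m.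
Proof.
pose T := maxn (maxn k m) T0.
have T0T : (T0 <= T)%N by lia.
have x1T : (1 <= 1 < T)%N by rewrite /=; lia.
have /andP[c1 c2] := chord_bounds T0T x1T.
apply: le_trans (chord_bound_lo_nondecreasing (_ : (k <= T)%N)) _; first lia.
apply: le_trans (le_trans c1 c2) _.
by apply: chord_bound_hi_nonincreasing; lia.
Qed.

Definition chord_limit := sup (range lo).

Lemma chord_limit_between T : lo T <= chord_limit <= hi T.
Proof.
have lo_sup : has_sup (range lo).
  by split; [exists (lo 0), 0%N | exists (hi 0) => _ [k _ <-]; exact: chord_bound_lo_le_hi].
apply/andP; split; first by apply: sup_upper_bound => //; exists T.
by apply: ge_sup; [case: lo_sup | move=> _ [k _ <-]; exact: chord_bound_lo_le_hi].
Qed.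

Lemma chord_limit_gt0 : 0 < chord_limit.
Proof.
have /andP[+ _] := chord_limit_between 0; apply: lt_le_trans.
by rewrite chord_bound_init // invr_gt0 N_gt0.
Qed.

Lemma chord_limit_ratio_dist T : (T0 <= T)%N ->
  `|chord_limit - M T / N T| <= ((hi T0 - lo T0) * N T0 + `|M 1|) / N T.
Proof.
move=> T0T; have NT : 0 < N T by apply: N_gt0; exact: leq_trans T0_ge2 T0T.
have x1T : (1 <= 1 < T)%N by rewrite /= (leq_trans T0_ge2 T0T).
have /andP[c1 c2] := chord_bounds T0T x1T.
have /andP[l1 l2] := chord_limit_between T.
have -> : M T / N T = chord T 1 + M 1 / N T by rewrite /chord N1 subr0 mulrBl subrK.
rewrite mulrDl -(chord_bound_width T0T) mulfK ?gt_eqF //.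
rewrite opprD addrA; apply: le_trans (ler_normB _ _) _.
rewrite normrM normfV (gtr0_norm NT) lerD2r.
by rewrite ler_norml; apply/andP; split; lra.
Qed.

Lemma common_rec_ratio_cvg : exists l : R, 0 < l /\ (fun T => M T / N T) @ \oo --> l.
Proof.
exists chord_limit; split; first exact: chord_limit_gt0.
apply/cvgrPdist_le => e e0; near=> T.
have T0T : (T0 <= T)%N by near: T; exact: nbhs_infty_ge.
have NT : 0 < N T by apply: N_gt0; exact: leq_trans T0_ge2 T0T.
apply: le_trans (chord_limit_ratio_dist T0T) _.
rewrite ler_pdivrMr // mulrC -ler_pdivrMl //.
have : ((hi T0 - lo T0) * N T0 + `|M 1|) / e + 1 <= T%:R.
  by near: T; exact: nbhs_infty_ger.
by have := N_ge (leq_trans (ltnW T0_ge2) T0T); lra.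
Unshelve. all: by end_near.
Qed.

End CommonRecurrence.

Lemma ratio_succ_subr_cvg0 (R : realType) (u v : nat -> R) (L C : R) (K : nat) :
  L != 0 -> (fun i => v i / u i) @ \oo --> L ->
  (forall i, (K <= i)%N -> u i != 0 /\ `|u i.+1 / u i| <= C) ->
  (fun i => u i.+1 / u i - v i.+1 / v i) @ \oo --> 0.
Proof.
move=> L0 a_cvg uK.
have a_succ : (fun i => v i.+1 / u i.+1 / (v i / u i)) @ \oo --> (1 : R).
  rewrite -(divff L0); apply: cvgM; last exact: cvgV.
  by rewrite (cvg_shiftS (fun i => v i / u i)).
apply/cvgr0Pnorm_le => e e0.
have eC : 0 < e / (`|C| + 1) by rewrite divr_gt0 // ltr_wpDl.
near=> i.
have Ki : (K <= i)%N by near: i; exact: nbhs_infty_ge.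
have [ui uC] := uK i Ki; have [ui1 _] := uK i.+1 (leqW Ki).
have ai : v i / u i != 0 by near: i; exact: cvgr_neq0 a_cvg L0.
have vi : v i != 0 by apply: contraNneq ai => ->; rewrite mul0r.
have -> : u i.+1 / u i - v i.+1 / v i =
    u i.+1 / u i * (1 - v i.+1 / u i.+1 / (v i / u i)) by field; rewrite ui ui1 vi.
have d : `|1 - v i.+1 / u i.+1 / (v i / u i)| <= e / (`|C| + 1).
  by near: i; exact: (cvgrPdist_le _ _).1 a_succ _ eC.
rewrite normrM; apply: le_trans (ler_pM (normr_ge0 _) (normr_ge0 _) uC d) _.
rewrite mulrCA ger_pMr // ler_pdivrMr ?ltr_wpDl // mul1r.
by apply: le_trans (ler_norm C) _; rewrite lerDl.
Unshelve. all: by end_near.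
Qed.

Lemma limn_esup_le_near (R : realType) (u v : nat -> R) :
  (forall e, 0 < e -> \forall i \near \oo, u i <= v i + e) ->
  (limn_esup (fun i => (u i)%:E) <= limn_esup (fun i => (v i)%:E))%E.
Proof.
move=> uv; rewrite !limn_esup_lim; apply/lee_addgt0Pr => e e0.
set V := esups (fun i => (v i)%:E).
have e_def : (limn V +? e%:E)%E by exact: fin_num_adde_defl.
have -> : (limn V + e%:E = limn (fun n => V n + e%:E))%E.
  rewrite (@limeD _ _ _ _ V (cst e%:E)) ?lim_cst //; first exact: is_cvg_esups.
  exact: cvg_cst.
apply: lee_lim; first exact: is_cvg_esups.
  by apply: is_cvgeD; [rewrite lim_cst | exact: is_cvg_esups | exact: is_cvg_cst].
have [K _ HK] := uv e e0; exists K => // n /= Kn.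
apply: ge_ereal_sup => _ [k /= nk <-].
apply: le_trans (_ : (v k)%:E + e%:E <= _)%E.
  by rewrite -EFinD lee_fin; apply: HK; exact: leq_trans nk.
by rewrite leeD2r //; apply: ereal_sup_ubound; exists k.
Qed.

Lemma limn_esup_eq_cvg0 (R : realType) (u v : nat -> R) :
  (fun i => u i - v i) @ \oo --> 0 ->
  limn_esup (fun i => (u i)%:E) = limn_esup (fun i => (v i)%:E).
Proof.
move=> /cvgr0Pnorm_le uv; apply/eqP; rewrite eq_le.
by apply/andP; split; apply: limn_esup_le_near => e e0; apply: filterS (uv e e0) => i;
  rewrite ler_norml => /andP[]; lra.
Qed.

Lemma assoc_seq_ratio_cvg (R : realType) (A : Type) (psi : nat -> nat + A)
    (n' : nat -> int) :
  is_function psi -> (forall i, (1 <= i)%N -> n' i < n' i.+1) ->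
  (exists T1, forall i, (T1 <= i)%N ->
      exists k, psi i = inl k /\ n' i.+1 = 2 * n' i - n' k) ->
  exists l : R, 0 < l /\ (fun i => (n' i)%:~R / (assoc_seq psi i)%:~R) @ \oo --> l.
Proof.
move=> psi_fun n'_lt [T1 n'_rec].
pose p T := if psi T is inl k then k else 0%N.
have psi_p T : (T1 <= T)%N -> psi T = inl (p T) /\ n' T.+1 = 2 * n' T - n' (p T).
  by move=> /n'_rec [k [ek ->]]; rewrite /p ek.
have p_lt T : (maxn T1 2 <= T)%N -> (1 <= p T < T)%N.
  by move=> T0T; apply: (is_function_inl psi_fun _ (psi_p T _).1); lia.
apply: (@common_rec_ratio_cvg R _ _ p (maxn T1 2)) => [||a a1|a a1||T T0T|T T0T].
- by rewrite leq_maxr.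
- by rewrite assoc_seq1.
- by apply: intr_lt_step; rewrite -lezD1; exact: assoc_seq_step.
- exact/intr_lt_step/n'_lt.
- exact: p_lt.
- have [ek _] := psi_p T (leq_trans (leq_maxl _ _) T0T).
  have /andP[k1 kT] := p_lt T T0T.
  by rewrite (assoc_seq_inl _ ek) ?k1 ?(ltnW kT) // intrB intrM.
- by have [_ ->] := psi_p T (leq_trans (leq_maxl _ _) T0T); rewrite intrB intrM.
Qed.

Theorem proposition6p2 (R : realType) (A : Type) (psi : nat -> nat + A)
  (n' : nat -> int) :
  reduced psi ->
  (delta R psi < (2%:R : R)%:E)%E ->
  (forall i, (1 <= i)%N -> 0 <= n' i) ->
  (forall i, (1 <= i)%N -> n' i < n' i.+1) ->
  (exists N, forall i, (N <= i)%N ->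
      exists k, psi i = inl k /\ n' i.+1 = 2 * n' i - n' k) ->
  (exists l : R, 0 < l /\
     (fun i : nat => ((n' i)%:~R / (assoc_seq psi i)%:~R : R)) @ \oo --> l) /\
  delta R psi = limsup_ratio R n'.
Proof.
move=> [psi_fun _] _ _ n'_lt n'_rec.
have [L [L_gt0 ratio]] := assoc_seq_ratio_cvg R psi_fun n'_lt n'_rec.
split; first by exists L.
apply: limn_esup_eq_cvg0; apply: (@ratio_succ_subr_cvg0 _ _ _ L 3 2 _ ratio).
  by rewrite gt_eqF.
by move=> i; exact: assoc_seq_ratio_bounded.
Qed.
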